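(* Let $G$ be a Lie group, $V_0,V_1$ vector spaces, $F_1:G\to GL(V_0)\times GL(V_1)$ a Lie group homomorphism, and let $\mathrm{Hom}(V_0,V_1)$ be a $G$-module via $g\cdot A=F_1(g)\circ A\circ F_1(g)^{-1}$. Let $\overline{F_2}:G\times G\to\mathrm{Hom}(V_0,V_1)$ and set $F_2(g_1,g_2)=\overline{F_2}(g_1,g_2)\circ F_1(g_1g_2)$ and $\widetilde{F_2}((g_1,\xi_1),(g_2,\xi_2),(g_3,\xi_3))=F_2(g_1,g_2)(\xi_3)$ on $G\ltimes V_0$. If $\overline{F_2}=\mathrm d\alpha$ for a smooth $\alpha:G\to\mathrm{Hom}(V_0,V_1)$, then $\widetilde{F_2}=\mathrm d\beta$, where $\beta((g_1,\xi_1),(g_2,\xi_2))=\alpha(g_1)F_1(g_1)(\xi_2)$.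
   Context: $G\ltimes V_0$ is the group $(g_1,\xi_1)(g_2,\xi_2)=(g_1g_2,\xi_1+F_1(g_1)\xi_2)$, acting on $V_1$ by $(g,\xi)\cdot m=F_1(g)m$. $\mathrm d$ denotes the group-cohomology differential: $(\mathrm d\alpha)(g_1,g_2)=g_1\cdot\alpha(g_2)-\alpha(g_1g_2)+\alpha(g_1)$ for 1-cochains, and $(\mathrm d\beta)(a,b,c)=a\cdot\beta(b,c)-\beta(ab,c)+\beta(a,bc)-\beta(a,b)$ for 2-cochains. *)

From HB Require Import structures.
From mathcomp Require Import all_boot all_order all_algebra.
From mathcomp Require Import reals.
Set Implicit Arguments. Unset Strict Implicit. Unset Printing Implicit Defensive.
Import GRing.Theory.
Local Open Scope ring_scope.

(* Generic group-cochain differentials, for a group law [mul] on [T]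
   acting on an additive group [M] via [act]. *)
Definition cd1 (T : Type) (M : zmodType) (mul : T -> T -> T)
  (act : T -> M -> M) (a : T -> M) : T -> T -> M :=
  fun g1 g2 => act g1 (a g2) - a (mul g1 g2) + a g1.

Definition cd2 (T : Type) (M : zmodType) (mul : T -> T -> T)
  (act : T -> M -> M) (b : T -> T -> M) : T -> T -> T -> M :=
  fun x y z => act x (b y z) - b (mul x y) z + b x (mul y z) - b x y.

Section Construction.
Variables (R : fieldType) (G : groupType) (V0 V1 : vectType R).
Variables (rho0 : G -> 'End(V0)) (rho1 : G -> 'End(V1)).

(* G-module structure on Hom(V0,V1): g . A = F1(g) o A o F1(g)^{-1},
   with F1(g)^{-1} on V0 written as F1(g^{-1}) (F1 is a homomorphism). *)
Definition homact (g : G) (A : 'Hom(V0, V1)) : 'Hom(V0, V1) :=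
  (rho1 g \o A \o rho0 (g^-1)%g)%VF.

Definition sdmul (x y : G * V0) : G * V0 :=
  ((x.1 * y.1)%g, x.2 + rho0 x.1 y.2).

Definition sdact (x : G * V0) (m : V1) : V1 := rho1 x.1 m.

Definition F2 (F2bar : G -> G -> 'Hom(V0, V1)) (g1 g2 : G) : 'Hom(V0, V1) :=
  (F2bar g1 g2 \o rho0 (g1 * g2)%g)%VF.

Definition F2tilde (F2bar : G -> G -> 'Hom(V0, V1)) (x y z : G * V0) : V1 :=
  F2 F2bar x.1 y.1 z.2.

Definition beta (alpha : G -> 'Hom(V0, V1)) (x y : G * V0) : V1 :=
  alpha x.1 (rho0 x.1 y.2).

End Construction.

From HB Require Import structures.
From mathcomp Require Import all_boot all_order all_algebra.
From mathcomp Require Import reals.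
From Stdlib Require Import FunctionalExtensionality.
Import GRing.Theory.
Local Open Scope ring_scope.

(* Expanding [d beta] at [((a, xi1), (b, xi2), (c, xi3))], the two terms
   [alpha(a) F1(a) xi2] coming from [beta(x, y)] and [beta(x, yz)] cancel,
   and the three remaining terms all end in [F1(ab) xi3]; since
   [(a . alpha(b)) o F1(a) = F1(a) o alpha(b)], their sum is
   [(d alpha)(a, b) o F1(ab)] applied to [xi3], which is [F2tilde]. *)

Section SemidirectCoboundary.
Variables (R : fieldType) (G : groupType) (V0 V1 : vectType R).
Variables (rho0 : G -> 'End(V0)) (rho1 : G -> 'End(V1)).
Hypothesis rho0_1 : rho0 1%g = \1%VF.
Hypothesis rho0_M : forall g h : G, rho0 (g * h)%g = (rho0 g \o rho0 h)%VF.

Lemma rho0_VK (g : G) (v : V0) : rho0 g^-1%g (rho0 g v) = v.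
Proof. by rewrite -comp_lfunE -rho0_M mulVg rho0_1 id_lfunE. Qed.

Lemma homact_rho0E (g : G) (A : 'Hom(V0, V1)) (v : V0) :
  homact rho0 rho1 g A (rho0 g v) = rho1 g (A v).
Proof. by rewrite /homact !comp_lfunE rho0_VK. Qed.

Lemma beta_sdmulr (alpha : G -> 'Hom(V0, V1)) (x y z : G * V0) :
  beta rho0 alpha x (sdmul rho0 y z)
    = beta rho0 alpha x y + alpha x.1 (rho0 (x.1 * y.1)%g z.2).
Proof. by rewrite /beta /sdmul /= !linearD rho0_M comp_lfunE. Qed.

Lemma cd2_beta (alpha : G -> 'Hom(V0, V1)) (x y z : G * V0) :
  cd2 (sdmul rho0) (sdact rho1) (beta rho0 alpha) x y z
    = F2tilde rho0 (cd1 (fun g h : G => (g * h)%g) (homact rho0 rho1) alpha)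
        x y z.
Proof.
rewrite /cd2 beta_sdmulr /F2tilde /F2 /cd1 /sdact comp_lfunE.
rewrite !add_lfunE opp_lfunE /beta /= addrA addrAC addrK.
by rewrite rho0_M comp_lfunE homact_rho0E.
Qed.

End SemidirectCoboundary.

Theorem mainTheorem13 (R : realType) (G : groupType) (V0 V1 : vectType R)
  (rho0 : G -> 'End(V0)) (rho1 : G -> 'End(V1))
  (rho0_1 : rho0 1%g = \1%VF)
  (rho0_M : forall g h : G, rho0 (g * h)%g = (rho0 g \o rho0 h)%VF)
  (rho1_1 : rho1 1%g = \1%VF)
  (rho1_M : forall g h : G, rho1 (g * h)%g = (rho1 g \o rho1 h)%VF)
  (F2bar : G -> G -> 'Hom(V0, V1)) (alpha : G -> 'Hom(V0, V1))
  (Halpha : F2bar = cd1 (fun g h : G => (g * h)%g) (homact rho0 rho1) alpha) :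
  F2tilde rho0 F2bar = cd2 (sdmul rho0) (sdact rho1) (beta rho0 alpha).
Proof.
subst F2bar.
do 3 apply: functional_extensionality => ?.
by rewrite cd2_beta.
Qed.
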